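(* For every integer $n\ge2$, \[ \sum_{j=0}^{n}\frac{B_j}{n-j+1}=1-(n+1)\sum_{k=1}^{n}{n\brace k}c_kH_k . \]
   Context: $B_j$ is the $j$th Bernoulli number ($\frac{t}{e^t-1}=\sum_{m\ge0}B_m\frac{t^m}{m!}$). ${n\brace k}$ is the Stirling number of the second kind, $H_k=\sum_{i=1}^k1/i$. The Cauchy numbers of the first kind are $c_k=k!\int_0^1\binom{x}{k}dx=\int_0^1x(x-1)\cdots(x-k+1)\,dx$. *)

From mathcomp Require Import all_boot all_order all_algebra.
Set Implicit Arguments. Unset Strict Implicit. Unset Printing Implicit Defensive.
Import Order.TTheory GRing.Theory Num.Theory.
Local Open Scope ring_scope.

(* Bernoulli numbers: coefficients of t/(e^t-1) = sum_m B_m t^m/m!.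
   Comparing coefficients of t^(m+1) in (e^t-1) * sum_k B_k t^k/k! = t gives
   B_0 = 1 and sum_(k<=m) C(m+1,k) B_k = 0 for m >= 1, i.e.
   B_m = -1/(m+1) * sum_(k<m) C(m+1,k) B_k  (so B_1 = -1/2). *)
Fixpoint bern_seq (n : nat) : seq rat :=
  match n with
  | 0 => [:: 1]
  | m.+1 => let s := bern_seq m in
            rcons s (- (m.+2)%:R^-1 *
                     \sum_(k < m.+1) ('C(m.+2, k))%:R * nth 0 s k)
  end.
Definition bernoulli (n : nat) : rat := nth 0 (bern_seq n) n.

Fixpoint stirling2 (n k : nat) : nat :=
  match n, k with
  | 0, 0 => 1
  | 0, _.+1 => 0
  | _.+1, 0 => 0
  | n'.+1, k'.+1 => k'.+1 * stirling2 n' k'.+1 + stirling2 n' k'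
  end.

Definition harmonic (k : nat) : rat := \sum_(1 <= i < k.+1) (i%:R)^-1.

Definition poly_int01 (p : {poly rat}) : rat :=
  \sum_(i < size p) p`_i / (i.+1)%:R.

Definition cauchy1 (k : nat) : rat :=
  poly_int01 (\prod_(i < k) ('X - (i%:R)%:P)).

From mathcomp Require Import all_boot all_order all_algebra.
From mathcomp Require Import ring zify.
Import GRing.Theory Num.Theory.
Local Open Scope ring_scope.

(* Expand x^n = sum_k {n brace k} x^(k) in falling factorials x^(k), whose integrals over
   [0,1] are the Cauchy numbers c_k.  The polynomial q_n = sum_k {n brace k} H_k x^(k) then
   satisfies q_(n+1) = x q_n + r_n, where r_n = sum_k {n brace k} x^(k+1)/(k+1) is the
   antidifference of x^n vanishing at 0, hence equals Faulhaber's polynomial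
   (1/(n+1)) sum_j C(n+1,j) B_j x^(n+1-j).  Solving the recursion in the monomial basis gives
   q_n = H_n x^n + sum_j (C(n,j)-1) B_j/j x^(n-j), and integrating over [0,1] turns
   (n+1) int_0^1 q_n into 1 - sum_j B_j/(n-j+1) via H_n + sum_j (C(n+1,j)-1) B_j/j = n/(n+1). *)

Lemma stirling2_eq0 n k : (n < k)%N -> stirling2 n k = 0%N.
Proof.
elim: n k => [|n IHn] [|k] //=; rewrite ltnS => lt_nk.
by rewrite (IHn k) // (IHn k.+1) ?muln0 // ltnW.
Qed.

Section FallingFactorial.
Variable R : comNzRingType.

Definition falling k : {poly R} := \prod_(i < k) ('X - i%:R%:P).

Lemma fallingS k : falling k.+1 = falling k * ('X - k%:R%:P).
Proof. by rewrite /falling big_ord_recr. Qed.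

Lemma mulX_falling k : 'X * falling k = falling k.+1 + k%:R *: falling k.
Proof. by rewrite fallingS -mul_polyC; ring. Qed.

Lemma horner_falling k y : (falling k).[y] = \prod_(i < k) (y - i%:R).
Proof. by rewrite /falling horner_prod; apply: eq_bigr => i _; rewrite hornerXsubC. Qed.

Lemma horner_fallingS0 k : (falling k.+1).[0] = 0.
Proof. by rewrite horner_falling big_ord_recl subrr mul0r. Qed.

Lemma falling_diff k y :
  (falling k.+1).[y + 1] - (falling k.+1).[y] = k.+1%:R * (falling k).[y].
Proof.
rewrite {1}horner_falling big_ord_recl fallingS hornerM hornerXsubC horner_falling.
under eq_bigr do rewrite lift0 -natr1 opprD addrACA subrr addr0.
by rewrite subr0 -natr1; set P := \prod_(_ < _) _; ring.
Qed.

Definition stirling_sum n (w : nat -> R) : {poly R} :=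
  \sum_(k < n.+1) ((stirling2 n k)%:R * w k) *: falling k.

Lemma stirling_sumS n w :
  stirling_sum n.+1 w = 'X * stirling_sum n w
    + \sum_(k < n.+1) ((stirling2 n k)%:R * (w k.+1 - w k)) *: falling k.+1.
Proof.
have shift : \sum_(k < n.+1) (k%:R * (stirling2 n k)%:R * w k) *: falling k
    = \sum_(k < n.+1) (k.+1%:R * (stirling2 n k.+1)%:R * w k.+1) *: falling k.+1.
  rewrite big_ord_recl [RHS]big_ord_recr (@stirling2_eq0 n n.+1) // !mulr0n.
  rewrite !(mul0r, mulr0) !scale0r add0r /= addr0.
  by apply: eq_bigr => i _; rewrite /bump /= add1n.
rewrite /stirling_sum big_ord_recl /= mul0r scale0r add0r mulr_sumr.
under eq_bigr do rewrite /bump /= add1n natrD natrM mulrDl scalerDl.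
rewrite big_split /= -shift addrC -!big_split /=.
apply: eq_bigr => k _; rewrite -scalerAr mulX_falling scalerDr scalerA.
by rewrite addrAC -scalerDl; congr (_ *: _ + _ *: _); ring.
Qed.

Lemma Xn_stirling n : 'X^n = stirling_sum n (fun=> 1).
Proof.
elim: n => [|n IHn].
  by rewrite /stirling_sum big_ord1 mulr1 scale1r /falling big_ord0 expr0.
rewrite stirling_sumS -IHn exprS big1 ?addr0 // => k _.
by rewrite subrr mulr0 scale0r.
Qed.

End FallingFactorial.

Arguments falling {R} k.
Arguments stirling_sum {R} n w.

Lemma poly_nat_eq0 (R : numDomainType) (p : {poly R}) :
  (forall i : nat, p.[i%:R] = 0) -> p = 0.
Proof.
move=> p_nat0; apply/eqP; apply/negPn/negP => nz_p.
pose rs : seq R := [seq i%:R | i <- iota 0 (size p)].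
have rs_roots : all (root p) rs by apply/allP => _ /mapP[i _ ->]; rewrite /root p_nat0.
have rs_uniq : uniq rs.
  by rewrite map_inj_uniq ?iota_uniq // => i j /eqP; rewrite eqr_nat => /eqP.
by have := max_poly_roots nz_p rs_roots rs_uniq; rewrite size_map size_iota ltnn.
Qed.

Lemma eq_poly_antidiff (R : numDomainType) (p q : {poly R}) :
  p.[0] = q.[0] -> (forall y, p.[y + 1] - p.[y] = q.[y + 1] - q.[y]) -> p = q.
Proof.
move=> pq0 dpq; apply/eqP; rewrite -subr_eq0; apply/eqP/poly_nat_eq0.
elim=> [|i]; first by rewrite hornerD hornerN pq0 subrr.
rewrite -natr1 !hornerD !hornerN => IHi.
have -> : p.[i%:R + 1] - q.[i%:R + 1] = (p.[i%:R + 1] - p.[i%:R])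
    - (q.[i%:R + 1] - q.[i%:R]) + (p.[i%:R] - q.[i%:R]) by ring.
by rewrite dpq IHi subrr addr0.
Qed.

Lemma size_bern_seq n : size (bern_seq n) = n.+1.
Proof. by elim: n => [|n IHn] //=; rewrite size_rcons IHn. Qed.

Lemma nth_bern_seq n k : (k <= n)%N -> nth 0 (bern_seq n) k = bernoulli k.
Proof.
move=> le_kn; rewrite /bernoulli -(subnK le_kn); elim: (n - k)%N => [|d IHd] //.
by rewrite addSn /= nth_rcons size_bern_seq ltnS leq_addl.
Qed.

Lemma bernoulli0 : bernoulli 0 = 1. Proof. by []. Qed.

Lemma sum_bin_bernoulli k :
  \sum_(j < k.+1) 'C(k.+1, j)%:R * bernoulli j = (k == 0%N)%:R.
Proof.
case: k => [|m]; first by rewrite big_ord1.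
rewrite big_ord_recr /= binSn.
have -> : bernoulli m.+1 = - m.+2%:R^-1 * \sum_(j < m.+1) 'C(m.+2, j)%:R * bernoulli j.
  rewrite /bernoulli /= nth_rcons size_bern_seq ltnn eqxx; congr (_ * _).
  by apply: eq_bigr => j _; rewrite nth_bern_seq // -ltnS.
by rewrite mulrA mulrN divff ?pnatr_eq0 // mulN1r subrr.
Qed.

Lemma mul_bin_subC m i j : (i + j <= m)%N ->
  ('C(m, j) * 'C(m - j, i) = 'C(m, i) * 'C(m - i, j))%N.
Proof.
have split_fact a b : (a + b <= m)%N ->
    ('C(m, a) * 'C(m - a, b) * (a`! * b`! * (m - a - b)`!) = m`!)%N.
  move=> le_abm; rewrite -(bin_fact (_ : a <= m)%N); last by lia.
  rewrite -(bin_fact (_ : b <= m - a)%N); last by lia.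
  ring.
move=> le_ijm; apply/eqP; rewrite -(eqn_pmul2r (_ : 0 < j`! * i`! * (m - j - i)`!)%N).
  rewrite split_fact 1?addnC // [(j`! * i`!)%N]mulnC subnAC split_fact //.
by rewrite !muln_gt0 !fact_gt0.
Qed.

Lemma bin_convolutionC (R : comNzRingType) N (a b : nat -> R) :
  \sum_(j < N) 'C(N, j)%:R * a j * \sum_(i < N - j) 'C(N - j, i)%:R * b i =
  \sum_(i < N) 'C(N, i)%:R * b i * \sum_(j < N - i) 'C(N - i, j)%:R * a j.
Proof.
have triangle (c d : nat -> R) :
    \sum_(j < N) 'C(N, j)%:R * c j * \sum_(i < N - j) 'C(N - j, i)%:R * d i =
    \sum_(j < N) \sum_(i < N) if (j + i < N)%N
      then ('C(N, j) * 'C(N - j, i))%:R * (c j * d i) else 0.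
  apply: eq_bigr => j _; rewrite mulr_sumr.
  rewrite (big_ord_widen N (fun i => 'C(N, j)%:R * c j * ('C(N - j, i)%:R * d i)));
    last exact: leq_subr.
  rewrite big_mkcond.
  apply: eq_bigr => i _; rewrite ltn_subRL; case: (j + i < N)%N => //.
  by rewrite natrM; ring.
rewrite !triangle exchange_big; apply: eq_bigr => i _; apply: eq_bigr => j _.
rewrite addnC; case: ifP => // /ltnW le_ijN.
by rewrite mul_bin_subC // (mulrC (b i)).
Qed.

Lemma diff_exprD1n (R : comNzRingType) (y : R) k :
  (y + 1) ^+ k - y ^+ k = \sum_(i < k) 'C(k, i)%:R * y ^+ i.
Proof.
rewrite exprD1n big_ord_recr /= binn mulr1n addrK.
by apply: eq_bigr => i _; rewrite mulr_natl.
Qed.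

Definition faulhaber n : {poly rat} :=
  n.+1%:R^-1 *: \sum_(j < n.+1) ('C(n.+1, j)%:R * bernoulli j) *: 'X^(n.+1 - j).

Lemma horner_faulhaber0 n : (faulhaber n).[0] = 0.
Proof.
rewrite hornerZ horner_sum big1 ?mulr0 // => j _.
by rewrite hornerZ hornerXn expr0n subn_eq0 leqNgt ltn_ord mulr0.
Qed.

Lemma faulhaber_diff n y : (faulhaber n).[y + 1] - (faulhaber n).[y] = y ^+ n.
Proof.
rewrite !hornerZ !horner_sum -mulrBr -sumrB.
under eq_bigr do rewrite !hornerZ !hornerXn -mulrBr diff_exprD1n.
rewrite (bin_convolutionC _ _ bernoulli (fun i => y ^+ i)).
under eq_bigr => i _ do rewrite (subSn (ltnSE (ltn_ord i))) sum_bin_bernoulli subn_eq0.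
rewrite big_ord_recr /= binSn leqnn mulr1 big1 ?add0r => [|i _].
  by rewrite mulrA mulVf ?mul1r ?pnatr_eq0.
by rewrite leqNgt ltn_ord mulr0.
Qed.

Definition stirling_antidiff n : {poly rat} :=
  \sum_(k < n.+1) ((stirling2 n k)%:R / k.+1%:R) *: falling k.+1.

Lemma stirling_antidiff_faulhaber n : stirling_antidiff n = faulhaber n.
Proof.
apply: eq_poly_antidiff => [|y].
  rewrite horner_faulhaber0 horner_sum big1 // => k _.
  by rewrite hornerZ horner_fallingS0 mulr0.
rewrite faulhaber_diff !horner_sum -sumrB -hornerXn (Xn_stirling _ n) horner_sum.
apply: eq_bigr => k _; rewrite !hornerZ -mulrBr falling_diff mulr1 mulrA.
by rewrite divfK ?pnatr_eq0.
Qed.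

Lemma harmonic0 : harmonic 0 = 0.
Proof. by rewrite /harmonic big_geq. Qed.

Lemma harmonicS k : harmonic k.+1 = harmonic k + k.+1%:R^-1.
Proof. by rewrite /harmonic big_nat_recr. Qed.

Lemma stirling_sum_harmonicS n :
  stirling_sum n.+1 harmonic = 'X * stirling_sum n harmonic + faulhaber n.
Proof.
rewrite stirling_sumS -stirling_antidiff_faulhaber; congr (_ + _).
by apply: eq_bigr => k _; rewrite harmonicS addrAC subrr add0r.
Qed.

Definition bern_coef n j : rat := ('C(n, j)%:R - 1) * bernoulli j / j%:R.

Definition harmonic_bernoulli_poly n : {poly rat} :=
  harmonic n *: 'X^n + \sum_(j < n.+1) bern_coef n j *: 'X^(n - j).

Lemma bern_coef0 n : bern_coef n 0 = 0.
Proof. by rewrite /bern_coef invr0 mulr0. Qed.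

Lemma bern_coefnn n : bern_coef n n = 0.
Proof. by rewrite /bern_coef binn subrr !mul0r. Qed.

Lemma natr_bin_divS (R : numFieldType) n j :
  'C(n, j)%:R / j.+1%:R = 'C(n.+1, j.+1)%:R / n.+1%:R :> R.
Proof.
by apply/eqP; rewrite eqr_div ?pnatr_eq0 // -!natrM mulnC (mul_bin_diag n.+1) mulnC.
Qed.

Lemma bern_coefS n j :
  bern_coef n.+1 j.+1 = bern_coef n j.+1 + 'C(n.+1, j.+1)%:R * bernoulli j.+1 / n.+1%:R.
Proof.
by rewrite /bern_coef (mulrAC ('C(n.+1, j.+1)%:R : rat)) -natr_bin_divS binS natrD; ring.
Qed.

Lemma harmonic_bernoulli_polyS n :
  harmonic_bernoulli_poly n.+1 = 'X * harmonic_bernoulli_poly n + faulhaber n.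
Proof.
have mulX_hbp : 'X * harmonic_bernoulli_poly n
    = harmonic n *: 'X^(n.+1) + \sum_(j < n.+1) bern_coef n j *: 'X^(n.+1 - j).
  rewrite mulrDr -scalerAr -exprS mulr_sumr; congr (_ + _).
  by apply: eq_bigr => j _; rewrite -scalerAr -exprS subSn // -ltnS.
rewrite mulX_hbp /harmonic_bernoulli_poly big_ord_recr /= bern_coefnn scale0r addr0.
rewrite /faulhaber scaler_sumr harmonicS scalerDl -!addrA; congr (_ + _).
rewrite -big_split /= big_ord_recl [RHS]big_ord_recl /= !bern_coef0 !scale0r !add0r.
rewrite subn0 scalerA; congr (_ *: _ + _).
  by rewrite bin0 bernoulli0 !mulr1.
apply: eq_bigr => j _; rewrite /bump /= add1n subSS scalerA -scalerDl bern_coefS.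
by rewrite mulrC.
Qed.

Lemma stirling_sum_harmonicE n : stirling_sum n harmonic = harmonic_bernoulli_poly n.
Proof.
elim: n => [|n IHn]; last by rewrite stirling_sum_harmonicS harmonic_bernoulli_polyS IHn.
rewrite /stirling_sum /harmonic_bernoulli_poly !big_ord1 harmonic0 bern_coef0.
by rewrite mulr0 !scale0r addr0.
Qed.

Lemma poly_int01E {N} {p : {poly rat}} :
  (size p <= N)%N -> poly_int01 p = \sum_(i < N) p`_i / i.+1%:R.
Proof.
move=> le_pN; rewrite /poly_int01 (big_ord_widen N (fun i => p`_i / i.+1%:R)) //.
rewrite big_mkcond; apply: eq_bigr => i _; case: ifPn => // /negbTE.
by rewrite ltnNge => /negbFE/(nth_default 0) ->; rewrite mul0r.
Qed.

Lemma poly_int01D p q : poly_int01 (p + q) = poly_int01 p + poly_int01 q.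
Proof.
set N := maxn (size p) (size q).
have le_pN : (size p <= N)%N := leq_maxl _ _.
have le_qN : (size q <= N)%N := leq_maxr _ _.
have le_pqN : (size (p + q)%R <= N)%N.
  by apply: leq_trans (size_polyD _ _) _; rewrite geq_max le_pN le_qN.
rewrite (poly_int01E le_pqN) (poly_int01E le_pN) (poly_int01E le_qN) -big_split.
by apply: eq_bigr => i _; rewrite coefD mulrDl.
Qed.

Lemma poly_int01Z a p : poly_int01 (a *: p) = a * poly_int01 p.
Proof.
rewrite (poly_int01E (size_scale_leq a p)) /poly_int01 mulr_sumr.
by apply: eq_bigr => i _; rewrite coefZ mulrA.
Qed.

Lemma poly_int01_sum I (r : seq I) (P : pred I) (F : I -> {poly rat}) :
  poly_int01 (\sum_(i <- r | P i) F i) = \sum_(i <- r | P i) poly_int01 (F i).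
Proof.
apply: (big_morph _ poly_int01D).
by rewrite /poly_int01 size_poly0 big_ord0.
Qed.

Lemma poly_int01_Xn m : poly_int01 'X^m = m.+1%:R^-1.
Proof.
rewrite /poly_int01 size_polyXn big_ord_recr /= coefXn eqxx mul1r big1 ?add0r //.
by move=> i _; rewrite coefXn ltn_eqF // mul0r.
Qed.

Lemma poly_int01_harmonic_bernoulli_poly n :
  poly_int01 (harmonic_bernoulli_poly n)
    = harmonic n / n.+1%:R + \sum_(j < n.+1) bern_coef n j / (n - j).+1%:R.
Proof.
rewrite poly_int01D poly_int01Z poly_int01_sum poly_int01_Xn; congr (_ + _).
by apply: eq_bigr => j _; rewrite poly_int01Z poly_int01_Xn.
Qed.

Lemma sum_bern_coefS n :
  \sum_(j < n.+2) bern_coef n.+2 j = \sum_(j < n.+1) bern_coef n.+1 j - n.+2%:R^-1.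
Proof.
have sum_bin_bernoulliS : \sum_(i < n.+1) 'C(n.+2, i.+1)%:R * bernoulli i.+1 = -1.
  have := sum_bin_bernoulli n.+1; rewrite big_ord_recl; under eq_bigr do rewrite lift0.
  by rewrite bin0 bernoulli0 mulr1 mulr0n => /eqP; rewrite addrC addr_eq0 => /eqP.
rewrite big_ord_recl bern_coef0 add0r; under eq_bigr do rewrite lift0 bern_coefS.
rewrite big_split /= -mulr_suml sum_bin_bernoulliS mulN1r; congr (_ - _).
rewrite big_ord_recr /= bern_coefnn addr0 [RHS]big_ord_recl bern_coef0 add0r.
by apply: eq_bigr => i _; rewrite lift0.
Qed.

Lemma harmonic_add_sum_bern_coef n :
  harmonic n + \sum_(j < n.+1) bern_coef n.+1 j = n%:R / n.+1%:R.
Proof.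
elim: n => [|n IHn]; first by rewrite harmonic0 big_ord1 bern_coef0 add0r mul0r.
rewrite sum_bern_coefS harmonicS addrACA IHn.
by field; rewrite -[1]/(1%:R) -!natrD !pnatr_eq0.
Qed.

Lemma bernoulli_div_add n j : (j <= n)%N ->
  bernoulli j / (n - j).+1%:R + n.+1%:R * (bern_coef n j / (n - j).+1%:R)
    = bern_coef n.+1 j + (j == 0%N)%:R / n.+1%:R.
Proof.
case: j => [_|j le_jn].
  by rewrite !bern_coef0 bernoulli0 subn0 mul0r mulr0 !addr0 add0r.
rewrite /bern_coef.
have e_n : n.+1 = ((n - j.+1).+1 + j.+1)%N by lia.
have e_C : 'C(n.+1, j.+1)%:R = n.+1%:R * 'C(n, j.+1)%:R / (n - j.+1).+1%:R :> rat.
  by rewrite -natrM (mul_bin_down n.+1) subSn // natrM mulrAC mulfV ?mul1r ?pnatr_eq0.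
rewrite e_C e_n natrD /= mul0r addr0.
by field; rewrite -[1]/(1%:R) -!natrD !pnatr_eq0.
Qed.

Lemma sum_bernoulli_div n :
  \sum_(j < n.+1) bernoulli j / (n - j).+1%:R
    = 1 - n.+1%:R * poly_int01 (harmonic_bernoulli_poly n).
Proof.
have nz_n1 : n.+1%:R != 0 :> rat by rewrite pnatr_eq0.
rewrite poly_int01_harmonic_bernoulli_poly mulrDr mulrCA mulfV // mulr1 mulr_sumr.
apply/eqP; rewrite eq_sym subr_eq addrCA -big_split /=.
under eq_bigr => j _ do rewrite (bernoulli_div_add _ _ (ltnSE (ltn_ord j))).
rewrite big_split /= addrA harmonic_add_sum_bern_coef -mulr_suml.
rewrite big_ord_recl big1 ?addr0 => [|i _]; last by rewrite lift0.
by rewrite -mulrDl -natrD addn1 mulfV.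
Qed.

Theorem mainTheorem13 (n : nat) (hn : (2 <= n)%N) :
  \sum_(0 <= j < n.+1) bernoulli j / (n - j + 1)%:R =
  1 - (n.+1)%:R * \sum_(1 <= k < n.+1) (stirling2 n k)%:R * cauchy1 k * harmonic k.
Proof.
(* The identity holds for every n. *)
rewrite big_mkord; under eq_bigr do rewrite addn1.
rewrite sum_bernoulli_div -stirling_sum_harmonicE poly_int01_sum big_add1 big_mkord /=.
rewrite big_ord_recl harmonic0 poly_int01Z mulr0 mul0r add0r.
by congr (1 - _ * _); apply: eq_bigr => k _; rewrite poly_int01Z lift0 mulrAC.
Qed.
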